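(* Let $\mu,\nu\in\Sigma$ be restricted roots such that $\mu+\nu\in\Sigma$. Then the bilinear pairing $\mathfrak g_\mu\times\mathfrak g_\nu\to\mathfrak g_{\mu+\nu}$, $(X,Y)\mapsto[X,Y]$, is nondegenerate: for every nonzero $X\in\mathfrak g_\mu$ there is $Y\in\mathfrak g_\nu$ with $[X,Y]\ne0$, and for every nonzero $Y\in\mathfrak g_\nu$ there is $X\in\mathfrak g_\mu$ with $[X,Y]\neq0$.
   Context: $\mathfrak g$ is the Lie algebra of the isometry group of a Riemannian symmetric space of noncompact type, $\mathfrak g=\mathfrak k\oplus\mathfrak p$ a Cartan decomposition, $\mathfrak a\subseteq\mathfrak p$ maximal abelian, $\Sigma\subset\mathfrak a^*$ the restricted root system and $\mathfrak g_\mu=\{X\in\mathfrak g:[H,X]=\mu(H)X\ \forall H\in\mathfrak a\}$ the restricted root spaces. *)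

From HB Require Import structures.
From mathcomp Require Import all_boot all_order all_algebra.
From mathcomp Require Import reals.
Set Implicit Arguments.
Unset Strict Implicit.
Unset Printing Implicit Defensive.
Import Order.TTheory GRing.Theory Num.Theory.
Local Open Scope ring_scope.

(* A finite-dimensional real Lie algebra g is modelled as 'rV[R]_n with a
   bracket br.  Subspaces of g are row spaces of matrices (mxalgebra, %MS). *)

Section LieDefs.
Variables (R : realType) (n : nat).
Implicit Types (X Y Z H : 'rV[R]_n) (A B I : 'M[R]_n).
Variable br : 'rV[R]_n -> 'rV[R]_n -> 'rV[R]_n.

Definition is_lie_bracket :=
  [/\ forall (a : R) X Y Z, br (a *: X + Y) Z = a *: br X Z + br Y Z,
      forall (a : R) X Y Z, br Z (a *: X + Y) = a *: br Z X + br Z Y,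
      forall X, br X X = 0 &
      forall X Y Z, br X (br Y Z) + br Y (br Z X) + br Z (br X Y) = 0].

Definition ad X : 'M[R]_n := lin1_mx (br X).
Definition killing X Y : R := \tr (ad X *m ad Y).

(* semisimple: nondegenerate Killing form (Cartan's criterion) *)
Definition semisimple := forall X, (forall Y, killing X Y = 0) -> X = 0.

Definition cartan_involution (theta : 'rV[R]_n -> 'rV[R]_n) :=
  [/\ forall (a : R) X Y, theta (a *: X + Y) = a *: theta X + theta Y,
      forall X, theta (theta X) = X,
      forall X Y, theta (br X Y) = br (theta X) (theta Y) &
      forall X, X != 0 -> 0 < - killing X (theta X)].

Definition is_ideal I := forall X Y, (X <= I)%MS -> (br Y X <= I)%MS.

(* effectivity: k = Fix(theta) contains no nonzero ideal of g
   (g is the Lie algebra of the isometry group, which acts effectively) *)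
Definition effective (theta : 'rV[R]_n -> 'rV[R]_n) :=
  forall I, is_ideal I -> (forall X, (X <= I)%MS -> theta X = X) ->
    forall X, (X <= I)%MS -> X = 0.

Definition sub_p (theta : 'rV[R]_n -> 'rV[R]_n) A :=
  forall H, (H <= A)%MS -> theta H = - H.

Definition abelian_sub A :=
  forall H H', (H <= A)%MS -> (H' <= A)%MS -> br H H' = 0.

Definition max_abelian_in_p (theta : 'rV[R]_n -> 'rV[R]_n) A :=
  [/\ sub_p theta A, abelian_sub A &
      forall B, (A <= B)%MS -> sub_p theta B -> abelian_sub B -> (B <= A)%MS].

(* a linear form mu on g (column vector); only its restriction to a matters *)
Definition form_eval (mu : 'cV[R]_n) H : R := (H *m mu) 0 0.

Definition root_space A (mu : 'cV[R]_n) X :=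
  forall H, (H <= A)%MS -> br H X = form_eval mu H *: X.

Definition restricted_root A (mu : 'cV[R]_n) :=
  (exists H, (H <= A)%MS /\ form_eval mu H != 0) /\
  (exists X, X != 0 /\ root_space A mu X).

End LieDefs.

From HB Require Import structures.
From mathcomp Require Import all_boot all_order all_algebra.
From mathcomp Require Import reals lra.
From Stdlib Require Import Classical_Prop.
Set Implicit Arguments.
Unset Strict Implicit.
Unset Printing Implicit Defensive.
Import Order.TTheory GRing.Theory Num.Theory.
Local Open Scope ring_scope.

(* Suppose X is a nonzero vector of g_mu with [X, g_nu] = 0 and put
   h = [X, theta X].  Then h commutes with a and theta h = -h, so h lies in a
   by maximality, and B_theta(h, H) = -mu(H) |X|^2 shows mu(h) < 0.  For
   Y in g_nu, [X, Y] = 0 gives |[theta X, Y]|^2 = -nu(h) |Y|^2, so nu(h) <= 0.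
   For Z in g_(mu+nu), [theta X, Z] lies in g_nu, hence is killed by X, hence
   vanishes; this gives |[X, Z]|^2 = (mu+nu)(h) |Z|^2, so (mu+nu)(h) >= 0.
   Choosing Y and Z nonzero, these three inequalities are incompatible. *)

Section LinearFun.
Variables (R : pzRingType) (U V : lmodType R) (f : U -> V).
Hypothesis f_lin : linear f.

Let fL : {linear U -> V} := HB.pack f (GRing.isLinear.Build _ _ _ _ f f_lin).

Lemma linear_fun0 : f 0 = 0. Proof. exact: (linear0 fL). Qed.
Lemma linear_funD x y : f (x + y) = f x + f y. Proof. exact: (linearD fL). Qed.
Lemma linear_funZ a x : f (a *: x) = a *: f x. Proof. exact: (linearZ_LR fL). Qed.
Lemma linear_funN x : f (- x) = - f x. Proof. exact: (linearN fL). Qed.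

End LinearFun.

Lemma mul_rV_lin1_fun (R : comNzRingType) m n (f : 'rV[R]_m -> 'rV[R]_n)
  (f_lin : linear f) u : u *m lin1_mx f = f u.
Proof. exact: (mul_rV_lin1 (HB.pack f (GRing.isLinear.Build _ _ _ _ f f_lin))). Qed.

Section FormEval.
Variables (R : realType) (n : nat).
Implicit Types (mu nu : 'cV[R]_n) (H : 'rV[R]_n).

Lemma form_evalDl mu nu H :
  form_eval (mu + nu) H = form_eval mu H + form_eval nu H.
Proof. by rewrite /form_eval mulmxDr mxE. Qed.

Lemma form_evalNl mu H : form_eval (- mu) H = - form_eval mu H.
Proof. by rewrite /form_eval mulmxN mxE. Qed.

Lemma form_evalNr mu H : form_eval mu (- H) = - form_eval mu H.
Proof. by rewrite /form_eval mulNmx mxE. Qed.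

End FormEval.

Section LieAlgebra.
Variables (R : realType) (n : nat) (br : 'rV[R]_n -> 'rV[R]_n -> 'rV[R]_n).
Hypothesis br_lie : is_lie_bracket br.
Implicit Types (X Y Z U V W H : 'rV[R]_n).

Lemma br_linearl Z : linear (br^~ Z).
Proof. by case: br_lie => brL _ _ _ a X Y; apply: brL. Qed.

Lemma br_linearr Z : linear (br Z).
Proof. by case: br_lie => _ brR _ _ a X Y; apply: brR. Qed.

Lemma br0r Z : br Z 0 = 0. Proof. exact: (linear_fun0 (br_linearr Z)). Qed.
Lemma brDl X Y Z : br (X + Y) Z = br X Z + br Y Z.
Proof. exact: (linear_funD (br_linearl Z)). Qed.
Lemma brDr X Y Z : br Z (X + Y) = br Z X + br Z Y.
Proof. exact: (linear_funD (br_linearr Z)). Qed.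
Lemma brZl a X Z : br (a *: X) Z = a *: br X Z.
Proof. exact: (linear_funZ (br_linearl Z)). Qed.
Lemma brZr a X Z : br Z (a *: X) = a *: br Z X.
Proof. exact: (linear_funZ (br_linearr Z)). Qed.
Lemma brNl X Z : br (- X) Z = - br X Z.
Proof. exact: (linear_funN (br_linearl Z)). Qed.
Lemma brNr X Z : br Z (- X) = - br Z X.
Proof. exact: (linear_funN (br_linearr Z)). Qed.

Lemma brxx X : br X X = 0. Proof. by case: br_lie. Qed.

Lemma brC X Y : br X Y = - br Y X.
Proof.
apply/eqP; rewrite -addr_eq0.
by have := brxx (X + Y); rewrite brDl !brDr !brxx add0r addr0 => ->.
Qed.

Lemma br_jacobi X Y Z : br X (br Y Z) = br (br X Y) Z + br Y (br X Z).
Proof.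
case: br_lie => _ _ _ /(_ X Y Z) jac.
rewrite [br Z X]brC brNr [br Z (br X Y)]brC in jac.
by apply/eqP; rewrite -subr_eq0 -jac opprD addrA addrAC.
Qed.

Lemma ad_mulE X v : v *m ad br X = br X v.
Proof. exact: (mul_rV_lin1_fun (br_linearr X)). Qed.

Lemma ad_br Z U : ad br (br Z U) = ad br U *m ad br Z - ad br Z *m ad br U.
Proof.
apply/row_matrixP => i; rewrite !rowE mulmxBr !mulmxA !ad_mulE.
by rewrite br_jacobi addrK.
Qed.

Lemma killing_invariant Z U V :
  killing br (br Z U) V = - killing br U (br Z V).
Proof.
rewrite /killing !ad_br mulmxBl mulmxBr !mxtraceD !raddfN /= -!mulmxA.
by rewrite [\tr (ad br Z *m _)]mxtrace_mulC -!mulmxA opprB.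
Qed.

Lemma root_space_br A a b X Y :
  root_space br A a X -> root_space br A b Y ->
  root_space br A (a + b) (br X Y).
Proof.
move=> Xa Yb H HA.
by rewrite br_jacobi (Xa H) // (Yb H) // brZl brZr form_evalDl scalerDl.
Qed.

Section CartanInvolution.
Variable theta : 'rV[R]_n -> 'rV[R]_n.
Hypothesis theta_cartan : cartan_involution br theta.

Lemma theta_linear : linear theta.
Proof. by case: theta_cartan => thL _ _ _ a X Y; apply: thL. Qed.

Lemma theta0 : theta 0 = 0. Proof. exact: (linear_fun0 theta_linear). Qed.
Lemma thetaD X Y : theta (X + Y) = theta X + theta Y.
Proof. exact: (linear_funD theta_linear). Qed.
Lemma thetaZ a X : theta (a *: X) = a *: theta X.
Proof. exact: (linear_funZ theta_linear). Qed.
Lemma thetaN X : theta (- X) = - theta X.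
Proof. exact: (linear_funN theta_linear). Qed.

Lemma thetaK : involutive theta. Proof. by case: theta_cartan. Qed.

Lemma theta_br X Y : theta (br X Y) = br (theta X) (theta Y).
Proof. by case: theta_cartan. Qed.

Lemma theta_eq0 X : (theta X == 0) = (X == 0).
Proof.
apply/eqP/eqP => [thX0|->]; last exact: theta0.
by rewrite -(thetaK X) thX0 theta0.
Qed.

Lemma ad_theta U : ad br (theta U) = lin1_mx theta *m ad br U *m lin1_mx theta.
Proof.
apply/row_matrixP => i; rewrite !rowE !mulmxA.
by rewrite !(mul_rV_lin1_fun theta_linear) !ad_mulE theta_br thetaK.
Qed.

Lemma killing_theta X Y : killing br (theta X) (theta Y) = killing br X Y.
Proof.
have thth : lin1_mx theta *m lin1_mx theta = 1%:M.
  apply/row_matrixP => i; rewrite !rowE mulmxA mulmx1.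
  by rewrite !(mul_rV_lin1_fun theta_linear) thetaK.
rewrite /killing !ad_theta !mulmxA -[_ *m lin1_mx theta *m lin1_mx theta]mulmxA.
by rewrite thth mulmx1 mxtrace_mulC !mulmxA thth mul1mx.
Qed.

Definition Btheta X Y := - killing br X (theta Y).

Lemma BthetaC X Y : Btheta X Y = Btheta Y X.
Proof. by rewrite /Btheta -killing_theta thetaK /killing mxtrace_mulC. Qed.

Lemma BthetaZr a X Y : Btheta X (a *: Y) = a * Btheta X Y.
Proof.
have adZ : ad br (a *: theta Y) = a *: ad br (theta Y).
  by apply/row_matrixP => i; rewrite !rowE -scalemxAr !ad_mulE brZl.
by rewrite /Btheta /killing thetaZ adZ -scalemxAr mxtraceZ mulrN.
Qed.

Lemma Btheta0r X : Btheta X 0 = 0.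
Proof. by rewrite -(scale0r 0) BthetaZr mul0r. Qed.

Lemma Btheta_adj Z U V : Btheta (br Z U) V = - Btheta U (br (theta Z) V).
Proof. by rewrite /Btheta killing_invariant theta_br thetaK opprK. Qed.

Lemma Btheta_gt0 X : X != 0 -> 0 < Btheta X X.
Proof. by case: theta_cartan => _ _ _; apply. Qed.

Lemma Btheta_eq0 X : Btheta X X = 0 -> X = 0.
Proof.
move=> BXX0; have [//|/Btheta_gt0] := eqVneq X 0.
by rewrite BXX0 ltxx.
Qed.

Lemma Btheta_ge0 X : 0 <= Btheta X X.
Proof.
have [->|/Btheta_gt0/ltW //] := eqVneq X 0.
by rewrite Btheta0r.
Qed.

Lemma Btheta_scale_ge0 W Y c : Btheta W W = c * Btheta Y Y -> Y != 0 -> 0 <= c.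
Proof.
by move=> BW /Btheta_gt0 BYpos; rewrite -(pmulr_lge0 _ BYpos) -BW Btheta_ge0.
Qed.

Section RestrictedRoots.
Variable A : 'M[R]_n.
Hypothesis A_max : max_abelian_in_p br theta A.
Implicit Types (mu nu : 'cV[R]_n).

Lemma root_space_theta mu X :
  root_space br A mu X -> root_space br A (- mu) (theta X).
Proof.
move=> Xmu H HA; have [pA _ _] := A_max.
rewrite -{1}(thetaK H) -theta_br (pA H HA) brNl (Xmu H HA).
by rewrite thetaN thetaZ form_evalNl scaleNr.
Qed.

Lemma max_abelian_sub h :
  theta h = - h -> (forall H, (H <= A)%MS -> br H h = 0) -> (h <= A)%MS.
Proof.
move=> th_h hA; have [pA abA maxA] := A_max.
have Ah_decomp K : (K <= A + h)%MS -> exists a c, (a <= A)%MS /\ K = a + c *: h.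
  case/sub_addsmxP=> -[u1 u2] /= ->; exists (u1 *m A), (u2 0 0).
  by rewrite submxMl {1}[u2]mx11_scalar mul_scalar_mx.
apply: submx_trans (addsmxSr A h) (maxA _ (addsmxSl A h) _ _).
  move=> K /Ah_decomp [a [c [aA ->]]].
  by rewrite thetaD thetaZ th_h (pA a aA) opprD scalerN.
move=> K K' /Ah_decomp [a [c [aA ->]]] /Ah_decomp [a' [c' [aA' ->]]].
rewrite brDl !brDr !brZl !brZr abA // hA //.
by rewrite [br h a']brC hA // brxx !(scaler0, oppr0, addr0).
Qed.

Lemma br_theta_root_sub mu X : root_space br A mu X -> (br X (theta X) <= A)%MS.
Proof.
move=> Xmu; apply: max_abelian_sub.
  by rewrite theta_br thetaK brC.
move=> H HA; have := root_space_br Xmu (root_space_theta Xmu) HA.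
by rewrite subrr /form_eval mulmx0 mxE scale0r.
Qed.

Lemma Btheta_br_theta mu X H : root_space br A mu X -> (H <= A)%MS ->
  Btheta (br X (theta X)) H =
  - form_eval mu H * Btheta (theta X) (theta X).
Proof.
move=> Xmu HA; rewrite Btheta_adj brC (root_space_theta Xmu HA).
by rewrite form_evalNl scaleNr (opprK (_ *: _)) BthetaZr mulNr.
Qed.

Lemma form_eval_br_theta_lt0 mu X :
  (exists H, (H <= A)%MS /\ form_eval mu H != 0) ->
  root_space br A mu X -> X != 0 -> form_eval mu (br X (theta X)) < 0.
Proof.
move=> [H0 [H0A muH0]] Xmu Xnz; set h := br X (theta X).
have BthX : 0 < Btheta (theta X) (theta X) by rewrite Btheta_gt0 ?theta_eq0.
have hnz : h != 0.
  apply: contraNneq muH0 => h0; have := Btheta_br_theta Xmu H0A.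
  rewrite -/h h0 BthetaC Btheta0r => /esym/eqP.
  by rewrite mulf_eq0 oppr_eq0 (gt_eqF BthX) orbF.
have := Btheta_gt0 hnz.
by rewrite (Btheta_br_theta Xmu (br_theta_root_sub Xmu)) -/h => Bhh; nra.
Qed.

Lemma Btheta_br_theta_root a b U Y :
  root_space br A a U -> root_space br A b Y -> br U Y = 0 ->
  Btheta (br (theta U) Y) (br (theta U) Y) =
  - form_eval b (br U (theta U)) * Btheta Y Y.
Proof.
move=> Ua Yb UY0; rewrite Btheta_adj thetaK br_jacobi.
by rewrite UY0 br0r addr0 (Yb _ (br_theta_root_sub Ua)) BthetaZr mulNr.
Qed.

Lemma annihilated_root_vector_eq0 mu nu X :
  (exists H, (H <= A)%MS /\ form_eval mu H != 0) ->
  (exists Y, Y != 0 /\ root_space br A nu Y) ->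
  (exists Z, Z != 0 /\ root_space br A (mu + nu) Z) ->
  root_space br A mu X -> (forall Y, root_space br A nu Y -> br X Y = 0) ->
  X = 0.
Proof.
move=> muA [Y0 [Y0nz Y0nu]] [Z0 [Z0nz Z0munu]] Xmu Xnu.
have [//|Xnz] := eqVneq X 0; set h := br X (theta X).
have mu_h : form_eval mu h < 0 by exact: form_eval_br_theta_lt0.
have nu_h : form_eval nu h <= 0.
  have := Btheta_br_theta_root Xmu Y0nu (Xnu _ Y0nu).
  by rewrite -oppr_ge0 => /Btheta_scale_ge0; apply.
have thXZ0 : br (theta X) Z0 = 0.
  have := root_space_br (root_space_theta Xmu) Z0munu; rewrite addKr => Wnu.
  apply: Btheta_eq0.
  by rewrite Btheta_adj thetaK (Xnu _ Wnu) Btheta0r oppr0.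
have munu_h : 0 <= form_eval (mu + nu) h.
  have := Btheta_br_theta_root (root_space_theta Xmu) Z0munu thXZ0.
  rewrite thetaK [br (theta X) X]brC form_evalNr opprK.
  by move/Btheta_scale_ge0; apply.
rewrite form_evalDl in munu_h.
by have := ltr_leD mu_h nu_h; rewrite addr0 ltNge munu_h.
Qed.

Lemma root_vector_br_neq0 mu nu X :
  (exists H, (H <= A)%MS /\ form_eval mu H != 0) ->
  (exists Y, Y != 0 /\ root_space br A nu Y) ->
  (exists Z, Z != 0 /\ root_space br A (mu + nu) Z) ->
  root_space br A mu X -> X != 0 ->
  exists Y, root_space br A nu Y /\ br X Y != 0.
Proof.
move=> muA nuroot munuroot Xmu Xnz; apply: NNPP => noY.
case/eqP: Xnz; apply: annihilated_root_vector_eq0 muA nuroot munuroot Xmu _.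
move=> Y Ynu; have [//|XYnz] := eqVneq (br X Y) 0.
by case: noY; exists Y.
Qed.

End RestrictedRoots.
End CartanInvolution.
End LieAlgebra.

Theorem lemma4p2 (R : realType) (n : nat)
  (br : 'rV[R]_n -> 'rV[R]_n -> 'rV[R]_n) (theta : 'rV[R]_n -> 'rV[R]_n)
  (A : 'M[R]_n) (mu nu : 'cV[R]_n) :
  is_lie_bracket br -> semisimple br -> cartan_involution br theta ->
  effective br theta -> max_abelian_in_p br theta A ->
  restricted_root br A mu -> restricted_root br A nu ->
  restricted_root br A (mu + nu) ->
  (forall X, root_space br A mu X -> X != 0 ->
     exists Y, root_space br A nu Y /\ br X Y != 0) /\
  (forall Y, root_space br A nu Y -> Y != 0 ->
     exists X, root_space br A mu X /\ br X Y != 0).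
Proof.
move=> br_lie _ theta_cartan _ A_max [muA muroot] [nuA nuroot] [_ munuroot].
split=> [X Xmu Xnz | Y Ynu Ynz].
  exact: (root_vector_br_neq0 br_lie theta_cartan A_max
    muA nuroot munuroot Xmu Xnz).
rewrite addrC in munuroot.
have [X [Xmu YXnz]] := root_vector_br_neq0 br_lie theta_cartan A_max
  nuA muroot munuroot Ynu Ynz.
by exists X; rewrite brC // oppr_eq0.
Qed.
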